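(* (1) Let $\mathfrak{F}$ be crisp. Then $\mathfrak{F}$ is finitely branching (i.e., $R(w)$ is finite for every $w\in\mathfrak{F}$) iff $\mathfrak{F}\models_{\mathbf{K}\mathsf{biG}}\mathbf{1}\ominus\lozenge((p\ominus q)\wedge q)$. (2) Let $\mathfrak{F}$ be fuzzy. Then $\mathfrak{F}$ is finitely branching and $\sup\{wRw':wRw'<1\}<1$ for all $w\in\mathfrak{F}$ iff $\mathfrak{F}\models_{\mathbf{K}\mathsf{biG}}\mathbf{1}\ominus\lozenge((p\ominus q)\wedge q)$.
   Context: $\ominus$ is Gödel coimplication: $b\ominus_\mathsf{G}a=0$ if $b\le a$, and $b$ otherwise; $a\rightarrow_\mathsf{G}b=1$ if $a\le b$, else $b$; $\wedge_\mathsf{G}=\min$, $\vee_\mathsf{G}=\max$; $\mathbf{1}:=p\rightarrow p$. A crisp frame is $\langle W,R\rangle$ with $R\subseteq W\times W$ and $R(w)=\{w':wRw'\}$; a fuzzy frame has $R:W\times W\to[0,1]$ and $R(w)=\{w':wRw'=1\}$. A $\mathbf{K}\mathsf{biG}$ model adds $v:\mathsf{Var}\times W\to[0,1]$, extended by the Gödel operations; on fuzzy frames $v(\lozenge\phi,w)=\sup_{w'}\{wRw'\wedge_\mathsf{G}v(\phi,w')\}$ and $v(\Box\phi,w)=\inf_{w'}\{wRw'\rightarrow_\mathsf{G}v(\phi,w')\}$; on crisp frames $v(\lozenge\phi,w)=\sup\{v(\phi,w'):wRw'\}$, $v(\Box\phi,w)=\inf\{v(\phi,w'):wRw'\}$ ($\sup\varnothing=0$,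 $\inf\varnothing=1$). $\mathfrak{F}\models_{\mathbf{K}\mathsf{biG}}\phi$ iff $v(\phi,w)=1$ for all $w$ and all models on $\mathfrak{F}$. *)

From mathcomp Require Import all_boot all_order all_algebra.
From mathcomp Require Import boolp classical_sets cardinality reals.
Set Implicit Arguments. Unset Strict Implicit. Unset Printing Implicit Defensive.
Import Order.TTheory GRing.Theory Num.Theory.
Local Open Scope classical_set_scope.
Local Open Scope ring_scope.

Inductive form : Type :=
| Var of nat
| And of form & form
| Or of form & form
| Imp of form & form
| Coimp of form & form     (* Coimp a b  is  a ⊖ b *)
| Box of form
| Dia of form.

Definition p_ : form := Var 0.
Definition q_ : form := Var 1.
(* 1 := p -> p *)
Definition top_ : form := Imp p_ p_.
Definition phi_fb : form := Coimp top_ (Dia (And (Coimp p_ q_) q_)).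

Section Semantics.
Variable R : realType.

Definition gimp (a b : R) : R := if a <= b then 1 else b.
Definition gcoimp (b a : R) : R := if b <= a then 0 else b.

Definition supr (S : set R) : R := if pselect (S !=set0) then sup S else 0.
Definition infr (S : set R) : R := if pselect (S !=set0) then inf S else 1.

Fixpoint cval (W : Type) (Rel : W -> W -> Prop) (v : nat -> W -> R)
  (f : form) (w : W) : R :=
  match f with
  | Var n => v n w
  | And a b => Num.min (cval Rel v a w) (cval Rel v b w)
  | Or a b => Num.max (cval Rel v a w) (cval Rel v b w)
  | Imp a b => gimp (cval Rel v a w) (cval Rel v b w)
  | Coimp a b => gcoimp (cval Rel v a w) (cval Rel v b w)
  | Box a => infr [set cval Rel v a w' | w' in Rel w]
  | Dia a => supr [set cval Rel v a w' | w' in Rel w]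
  end.

Fixpoint fval (W : Type) (Rel : W -> W -> R) (v : nat -> W -> R)
  (f : form) (w : W) : R :=
  match f with
  | Var n => v n w
  | And a b => Num.min (fval Rel v a w) (fval Rel v b w)
  | Or a b => Num.max (fval Rel v a w) (fval Rel v b w)
  | Imp a b => gimp (fval Rel v a w) (fval Rel v b w)
  | Coimp a b => gcoimp (fval Rel v a w) (fval Rel v b w)
  | Box a => infr [set gimp (Rel w w') (fval Rel v a w') | w' in [set: W]]
  | Dia a => supr [set Num.min (Rel w w') (fval Rel v a w') | w' in [set: W]]
  end.

Definition valuation_ok (W : Type) (v : nat -> W -> R) : Prop :=
  forall n w, 0 <= v n w <= 1.

Definition crisp_valid (W : Type) (Rel : W -> W -> Prop) (f : form) : Prop :=
  forall v : nat -> W -> R, valuation_ok v -> forall w, cval Rel v f w = 1.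

Definition fuzzy_valid (W : Type) (Rel : W -> W -> R) (f : form) : Prop :=
  forall v : nat -> W -> R, valuation_ok v -> forall w, fval Rel v f w = 1.

Definition fuzzy_frame (W : Type) (Rel : W -> W -> R) : Prop :=
  forall w w', 0 <= Rel w w' <= 1.

Definition fuzzy_fin_branching (W : Type) (Rel : W -> W -> R) : Prop :=
  forall w, finite_set [set w' | Rel w w' = 1].

End Semantics.

Definition crisp_fin_branching (W : Type) (Rel : W -> W -> Prop) : Prop :=
  forall w, finite_set (Rel w).

From mathcomp Require Import all_boot all_order all_algebra.
From mathcomp Require Import boolp classical_sets functions cardinality reals.
Set Implicit Arguments. Unset Strict Implicit. Unset Printing Implicit Defensive.
Import Order.TTheory GRing.Theory Num.Theory.
Local Open Scope classical_set_scope.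
Local Open Scope ring_scope.

(* The argument (p ⊖ q) ∧ q of the diamond is < 1 everywhere (it is 0 when
   p <= q, and q < p <= 1 otherwise), and it equals q where p = 1 > q. So
   1 ⊖ ◇((p ⊖ q) ∧ q) is valid at w iff the values under the diamond are
   bounded away from 1. Finitely many successors give finitely many values
   < 1, and fuzzy successors with wRw' < 1 contribute at most
   sup{wRw' | wRw' < 1} < 1. Conversely, with p = 1, infinitely many
   successors can carry the q-values 1 - 1/(n+1), and when
   sup{wRw' | wRw' < 1} = 1 the choice q(w') = wRw' on those successors
   drives the supremum to 1. *)

Lemma infinite_set_injseq (W : Type) (A : set W) : ~ finite_set A ->
  exists2 g : nat -> W, (forall n, A (g n)) & injective g.
Proof.
move=> /infiniteP/card_leP[f].
pose g n := \val (f (SigSub (mem_set (I : [set: nat] n)))).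
exists g => [n | m n /val_inj /(@inj _ _ _ f) fmn].
  by have := valP (f (SigSub (mem_set (I : [set: nat] n)))); rewrite inE.
exact: (congr1 val (fmn (mem_set I) (mem_set I))).
Qed.

Lemma finite_set_ubound_lt (R : realDomainType) (S : set R) (c : R) :
  finite_set S -> (forall x, S x -> x < c) -> exists2 m, m < c & ubound S m.
Proof.
move=> /finite_fsetP[X ->{S}] ltc.
suff [m mc ubm] : exists2 m, m < c & forall x, x \in finmap.enum_fset X -> x <= m.
  by exists m.
have : all (< c) (finmap.enum_fset X) by apply/allP => x; exact: ltc.
elim: (finmap.enum_fset X) => [_ | a s IHs /= /andP[ac /IHs[m mc ubm]]].
  by exists (c - 1); rewrite ?gtrBl ?ltr01.
exists (Num.max a m) => [|x]; first by rewrite gt_max ac.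
by rewrite inE => /predU1P[->|/ubm xm]; rewrite le_max ?lexx // xm orbT.
Qed.

Section GoedelSemantics.
Variable R : realType.

Lemma supr_ub (S : set R) x : has_ubound S -> S x -> x <= supr S.
Proof.
move=> ubS Sx; rewrite /supr; case: pselect => [S0 | []]; last by exists x.
exact: sup_upper_bound.
Qed.

Lemma supr_lt1P (S : set R) :
  has_ubound S -> supr S < 1 <-> exists2 m, m < 1 & ubound S m.
Proof.
move=> ubS; split=> [supr_lt1 | [m m1 ubm]].
  by exists (supr S) => // x; exact: supr_ub.
rewrite /supr; case: pselect => S0; last exact: ltr01.
exact: le_lt_trans (ge_sup S0 ubm) m1.
Qed.

Lemma gimpxx (a : R) : gimp a a = 1.
Proof. by rewrite /gimp lexx. Qed.

Lemma gcoimp1_eq1 (a : R) : gcoimp 1 a = 1 <-> a < 1.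
Proof.
rewrite /gcoimp ltNge; case: (1 <= a); split=> //.
by move/eqP; rewrite eq_sym oner_eq0.
Qed.

Definition coimp_min (a b : R) : R := Num.min (gcoimp a b) b.

Lemma coimp_min_lt1 (a b : R) : 0 <= b -> a <= 1 -> coimp_min a b < 1.
Proof.
move=> b0 a1; rewrite /coimp_min /gcoimp gt_min.
case: (leP a b) => [_ | ba]; first by rewrite ltr01.
by rewrite (lt_le_trans ba a1) orbT.
Qed.

Lemma coimp_min1 (b : R) : b < 1 -> coimp_min 1 b = b.
Proof. by move=> b1; rewrite /coimp_min /gcoimp leNgt b1 /= min_r // ltW. Qed.

Lemma valuation_coimp_min_lt1 (W : Type) (v : nat -> W -> R) x :
  valuation_ok v -> coimp_min (v 0%N x) (v 1%N x) < 1.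
Proof.
move=> vok; have /andP[_ p1] := vok 0%N x; have /andP[q0 _] := vok 1%N x.
exact: coimp_min_lt1.
Qed.

Lemma cval_phi_fbP (W : Type) (Rel : W -> W -> Prop) (v : nat -> W -> R) w :
  valuation_ok v ->
  cval Rel v phi_fb w = 1 <->
  exists2 m, m < 1 & ubound [set coimp_min (v 0%N x) (v 1%N x) | x in Rel w] m.
Proof.
move=> vok; rewrite /phi_fb /top_ /p_ /q_ /= gimpxx gcoimp1_eq1.
apply: supr_lt1P; exists 1 => _ [x _ <-].
exact/ltW/valuation_coimp_min_lt1.
Qed.

Lemma fval_phi_fbP (W : Type) (Rel : W -> W -> R) (v : nat -> W -> R) w :
  valuation_ok v ->
  fval Rel v phi_fb w = 1 <->
  exists2 m, m < 1 &
    ubound [set Num.min (Rel w x) (coimp_min (v 0%N x) (v 1%N x)) | x in [set: W]] m.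
Proof.
move=> vok; rewrite /phi_fb /top_ /p_ /q_ /= gimpxx gcoimp1_eq1.
apply: supr_lt1P; exists 1 => _ [x _ <-].
by rewrite ge_min (ltW (valuation_coimp_min_lt1 x vok)) orbT.
Qed.

Definition val_p1 (W : Type) (f : W -> R) : nat -> W -> R :=
  fun n x => if n is 0%N then 1 else f x.

Lemma val_p1_ok (W : Type) (f : W -> R) :
  (forall x, 0 <= f x < 1) -> valuation_ok (val_p1 f).
Proof.
move=> f01 [|n] x; first by rewrite ler01 lexx.
by have /andP[-> /ltW->] := f01 x.
Qed.

Definition approx1 (n : nat) : R := 1 - n.+1%:R^-1.

Lemma approx1_ge0 n : 0 <= approx1 n.
Proof. by rewrite subr_ge0 invf_le1 ?ltr0n ?ler1n. Qed.

Lemma approx1_lt1 n : approx1 n < 1.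
Proof. by rewrite gtrBl invr_gt0 ltr0n. Qed.

Lemma approx1_unbounded (m : R) : m < 1 -> exists n, m < approx1 n.
Proof.
rewrite -subr_gt0 => m1; set n := Num.bound (1 - m)^-1.
have ltn : (1 - m)^-1 < n.+1%:R.
  apply: lt_trans (archi_boundP _) _; last by rewrite ltr_nat.
  by rewrite invr_ge0 ltW.
exists n; rewrite /approx1 ltrBrDl -ltrBrDr.
by rewrite -[1 - m]invrK ltf_pV2 ?posrE ?invr_gt0 ?ltr0n.
Qed.

Lemma infinite_unbounded_val (W : Type) (A : set W) : ~ finite_set A ->
  exists2 v : nat -> W -> R, valuation_ok v &
    forall m, m < 1 -> exists2 x, A x & m < coimp_min (v 0%N x) (v 1%N x).
Proof.
move=> /infinite_set_injseq[g Ag ginj].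
pose f x := approx1 (pinv [set: nat] g x).
have f01 x : 0 <= f x < 1 by rewrite approx1_ge0 approx1_lt1.
exists (val_p1 f); first exact: val_p1_ok.
move=> m /approx1_unbounded[n mn]; exists (g n) => //=.
by rewrite coimp_min1 ?approx1_lt1 // /f pinvKV ?in_setT //; exact: in2W.
Qed.

Lemma crisp_fin_branching_valid (W : Type) (Rel : W -> W -> Prop) :
  crisp_fin_branching Rel -> crisp_valid R Rel phi_fb.
Proof.
move=> fb v vok w; apply/cval_phi_fbP => //.
apply: finite_set_ubound_lt; first exact: finite_image.
by move=> _ [x _ <-]; exact: valuation_coimp_min_lt1.
Qed.

Lemma crisp_valid_fin_branching (W : Type) (Rel : W -> W -> Prop) :
  crisp_valid R Rel phi_fb -> crisp_fin_branching Rel.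
Proof.
move=> valid w; apply: contrapT => /infinite_unbounded_val[v vok unb].
have [m m1 ubm] := (cval_phi_fbP Rel w vok).1 (valid v vok w).
have [x Rx] := unb m m1; apply/negP; rewrite -leNgt.
exact/ubm/imageP.
Qed.

Lemma fuzzy_fin_branching_valid (W : Type) (Rel : W -> W -> R) :
  fuzzy_frame Rel -> fuzzy_fin_branching Rel ->
  (forall w, supr [set Rel w w' | w' in [set w' | Rel w w' < 1]] < 1) ->
  fuzzy_valid Rel phi_fb.
Proof.
move=> frame fb sup_lt1 v vok w; apply/fval_phi_fbP => //.
have [s s1 ubs] : exists2 s, s < 1 &
    ubound [set Rel w w' | w' in [set w' | Rel w w' < 1]] s.
  by apply/supr_lt1P => //; exists 1 => _ [x _ <-]; case/andP: (frame w x).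
have [m m1 ubm] : exists2 m, m < 1 &
    ubound [set coimp_min (v 0%N x) (v 1%N x) | x in [set x | Rel w x = 1]] m.
  apply: finite_set_ubound_lt; first exact: finite_image.
  by move=> _ [x _ <-]; exact: valuation_coimp_min_lt1.
exists (Num.max s m) => [|_ [x _ <-]]; first by rewrite gt_max s1 m1.
rewrite le_max; have [Rlt1 | R1] := ltP (Rel w x) 1.
  by rewrite ge_min (ubs (Rel w x)) //; exists x.
have Rx1 : Rel w x = 1 by apply/le_anti; rewrite R1 andbT; case/andP: (frame w x).
rewrite Rx1 min_r ?(ltW (valuation_coimp_min_lt1 x vok)) //.
by rewrite (ubm (coimp_min _ _)) ?orbT //; exists x.
Qed.

Lemma fuzzy_valid_fin_branching (W : Type) (Rel : W -> W -> R) :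
  fuzzy_valid Rel phi_fb -> fuzzy_fin_branching Rel.
Proof.
move=> valid w; apply: contrapT => /infinite_unbounded_val[v vok unb].
have [m m1 ubm] := (fval_phi_fbP Rel w vok).1 (valid v vok w).
have [x /= Rx1] := unb m m1; apply/negP; rewrite -leNgt.
suff : Num.min (Rel w x) (coimp_min (v 0%N x) (v 1%N x)) <= m.
  by rewrite Rx1 min_r // ltW // valuation_coimp_min_lt1.
exact/ubm/imageP.
Qed.

Lemma fuzzy_valid_sup_lt1 (W : Type) (Rel : W -> W -> R) :
  fuzzy_frame Rel -> fuzzy_valid Rel phi_fb ->
  forall w, supr [set Rel w w' | w' in [set w' | Rel w w' < 1]] < 1.
Proof.
move=> frame valid w.
pose f x := if Rel w x < 1 then Rel w x else 0.
have f01 x : 0 <= f x < 1.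
  rewrite /f; case: ifPn => [Rlt1 | _]; last by rewrite lexx ltr01.
  by rewrite Rlt1 andbT; case/andP: (frame w x).
have vok := val_p1_ok f01.
have [m m1 ubm] := (fval_phi_fbP Rel w vok).1 (valid _ vok w).
apply/supr_lt1P; first by exists 1 => _ [x _ <-]; case/andP: (frame w x).
exists m => // _ [x /= Rlt1 <-].
have fx : f x = Rel w x by rewrite /f Rlt1.
have := ubm _ (imageP _ (I : [set: W] x)).
by rewrite /= coimp_min1 fx ?minxx // -fx; case/andP: (f01 x).
Qed.

End GoedelSemantics.

Theorem theorem2 (R : realType) :
  (forall (W : Type) (Rel : W -> W -> Prop),
      crisp_fin_branching Rel <-> crisp_valid R Rel phi_fb) /\
  (forall (W : Type) (Rel : W -> W -> R),
      fuzzy_frame Rel ->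
      ((fuzzy_fin_branching Rel /\
        forall w, supr [set Rel w w' | w' in [set w' | Rel w w' < 1]] < 1)
       <-> fuzzy_valid Rel phi_fb)).
Proof.
split=> [W Rel | W Rel frame]; split.
- exact: crisp_fin_branching_valid.
- exact: crisp_valid_fin_branching.
- by case; exact: fuzzy_fin_branching_valid.
- move=> valid; split; first exact: fuzzy_valid_fin_branching.
  exact: fuzzy_valid_sup_lt1.
Qed.
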